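(* Let $H\in\mathbb{R}^{m\times d}$, $L\in\mathbb{R}^{\ell\times d}$, $y\in\mathbb{R}^m$, $\tilde y\in\mathbb{R}^\ell$ be such that the solution sets $\{\theta\in\mathbb{R}^d: H\theta=y\}$ and $\{\theta\in\mathbb{R}^d: L\theta=\tilde y\}$ are both non-empty. Let $\Sigma\in\mathbb{R}^{d\times d}$ be symmetric positive semidefinite. Then: (a) If there is $a\in\mathbb{R}\setminus\{0\}$ with $a\,L^\top L=H^\top H$ and $a\,L^\top\tilde y=H^\top y$, then $\{\theta: H\theta=y\}=\{\theta: L\theta=\tilde y\}$. (b) Suppose $\operatorname{tr}(H\Sigma H^\top)>0$ and $\operatorname{tr}(L\Sigma L^\top)>0$. Then $ATS_s(x,H,y)=ATS_s(x,L,\tilde y)$ for all $x\in\mathbb{R}^d$ if and only if there exists $a>0$ with $a\,L^\top L=H^\top H$, $a\,L^\top\tilde y=H^\top y$ and $\|y\|=\sqrt{a}\,\|\tilde y\|$. (c) Suppose additionally $\operatorname{tr}(H\Sigma H^\top H\Sigma H^\top)\neq 0$ and $\operatorname{tr}(L\Sigma L^\top L\Sigma L^\top)\neq0$. Then $ATS_F(x,H,y)=ATS_F(x,L,\tilde y)$ for all $x\in\mathbb{R}^d$ if and only if there exists $a>0$ with $a\,L^\top L=H^\top H$, $a\,L^\top\tilde y=H^\top y$ and $\|y\|=\sqrt{a}\,\|\tilde y\|$.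
   Context: For a matrix $H\in\mathbb{R}^{m\times d}$, a vector $y\in\mathbb{R}^m$ and $x\in\mathbb{R}^d$, the Anova-type statistic is $ATS(x,H,y)=(Hx-y)^\top(Hx-y)$. Given a fixed symmetric positive semidefinite matrix $\Sigma\in\mathbb{R}^{d\times d}$, $ATS_s(x,H,y)=ATS(x,H,y)/\operatorname{tr}(H\Sigma H^\top)$ and $ATS_F(x,H,y)=ATS_s(x,H,y)\cdot\frac{[\operatorname{tr}(H\Sigma H^\top)]^2}{\operatorname{tr}(H\Sigma H^\top H\Sigma H^\top)}$. The same $\Sigma$ is used for both $H$ and $L$. $\|\cdot\|$ is the Euclidean norm. *)

From mathcomp Require Import all_boot all_order all_algebra.
Set Implicit Arguments. Unset Strict Implicit. Unset Printing Implicit Defensive.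
Import Order.TTheory GRing.Theory Num.Theory.
Local Open Scope ring_scope.

Section Defs.
Variable R : rcfType.

Definition ATS (m d : nat) (x : 'cV[R]_d) (H : 'M[R]_(m, d)) (y : 'cV[R]_m) : R :=
  (((H *m x - y)^T *m (H *m x - y)) 0 0).

Definition ATS_s (m d : nat) (Sigma : 'M[R]_d) (x : 'cV[R]_d) (H : 'M[R]_(m, d))
  (y : 'cV[R]_m) : R :=
  ATS x H y / \tr (H *m Sigma *m H^T).

Definition ATS_F (m d : nat) (Sigma : 'M[R]_d) (x : 'cV[R]_d) (H : 'M[R]_(m, d))
  (y : 'cV[R]_m) : R :=
  ATS_s Sigma x H y * ((\tr (H *m Sigma *m H^T)) ^+ 2
                       / \tr (H *m Sigma *m H^T *m H *m Sigma *m H^T)).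

Definition enorm (n : nat) (v : 'cV[R]_n) : R := Num.sqrt (\sum_i v i 0 ^+ 2).

Definition psd (d : nat) (S : 'M[R]_d) : Prop :=
  S^T = S /\ forall v : 'cV[R]_d, 0 <= ((v^T *m S *m v) 0 0).

Definition solset (m d : nat) (H : 'M[R]_(m, d)) (y : 'cV[R]_m) : 'cV[R]_d -> Prop :=
  fun theta => H *m theta = y.
End Defs.

(* ATS(x, H, y) is the quadratic polynomial x^T H^T H x - 2 x^T H^T y + |y|^2 in x, and a quadratic
   polynomial vanishes identically only if all its coefficients do.  Hence ATS(., H, y) = c ATS(., L, yt)
   holds for every x exactly when c L^T L = H^T H, c L^T yt = H^T y and |y|^2 = c |yt|^2.  Both ATS_s and
   ATS_F are ATS times a positive constant depending only on H^T H (through the traces), so comparing them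
   is such a proportionality with c fixed by the traces, and the constants on both sides match once
   a L^T L = H^T H.  Part (a) holds because a consistent system H t = y has the same solutions as its
   normal equations H^T H t = H^T y. *)
From mathcomp Require Import all_boot all_order all_algebra.
From mathcomp Require Import ring lra.
Import Order.TTheory GRing.Theory Num.Theory.
Set Implicit Arguments. Unset Strict Implicit. Unset Printing Implicit Defensive.
Local Open Scope ring_scope.

Section QuadraticForms.
Variables (R : realFieldType) (d : nat).
Implicit Types (P : 'M[R]_d) (b u v x : 'cV[R]_d).

Definition bform P u v : R := (u^T *m P *m v) 0 0.
Definition qform P x : R := bform P x x.
Definition lform b x : R := (x^T *m b) 0 0.

Lemma bform_delta P (i j : 'I_d) : bform P (delta_mx i 0) (delta_mx j 0) = P i j.
Proof. by rewrite /bform trmx_delta -rowE -colE !mxE. Qed.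

Lemma qformD P u v : qform P (u + v) = qform P u + bform P u v + bform P v u + qform P v.
Proof.
rewrite /qform /bform [(u + v)^T]linearD /= !(mulmxDl, mulmxDr) !mxE.
by rewrite -!addrA; congr (_ + _); rewrite addrCA.
Qed.

Lemma qformN P x : qform P (- x) = qform P x.
Proof. by rewrite /qform /bform [(- x)^T]linearN /= mulNmx mulmxN mulNmx opprK. Qed.

Lemma lformN b x : lform b (- x) = - lform b x.
Proof. by rewrite /lform [(- x)^T]linearN /= mulNmx mxE. Qed.

Lemma qform0 P : qform P 0 = 0.
Proof. by rewrite /qform /bform trmx0 !mul0mx mxE. Qed.

Lemma lform0 b : lform b 0 = 0.
Proof. by rewrite /lform trmx0 mul0mx mxE. Qed.

Lemma qformZ P (c : R) x : qform (c *: P) x = c * qform P x.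
Proof. by rewrite /qform /bform -scalemxAr -scalemxAl !mxE. Qed.

Lemma lformZ b (c : R) x : lform (c *: b) x = c * lform b x.
Proof. by rewrite /lform -scalemxAr !mxE. Qed.

Lemma qformB P Q x : qform (P - Q) x = qform P x - qform Q x.
Proof. by rewrite /qform /bform mulmxBr mulmxBl !mxE. Qed.

Lemma lformB b c x : lform (b - c) x = lform b x - lform c x.
Proof. by rewrite /lform mulmxBr !mxE. Qed.

Lemma sym_qform_eq0 P : P^T = P -> (forall x, qform P x = 0) -> P = 0.
Proof.
move=> sP q0; apply/matrixP => i j; rewrite mxE.
have := qformD P (delta_mx i 0) (delta_mx j 0).
have Pji : P j i = P i j by rewrite -[in LHS]sP mxE.
by rewrite !q0 /qform !bform_delta Pji; lra.
Qed.

Lemma lform_eq0 b : (forall x, lform b x = 0) -> b = 0.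
Proof.
move=> l0; apply/matrixP => i j; rewrite (ord1 j) mxE -(l0 (delta_mx i 0)).
by rewrite /lform trmx_delta -rowE mxE.
Qed.

Lemma quadratic_eq0 P b (s : R) : P^T = P ->
  (forall x, qform P x - 2 * lform b x + s = 0) -> [/\ P = 0, b = 0 & s = 0].
Proof.
move=> sP h.
have s0 : s = 0 by have := h 0; rewrite qform0 lform0; lra.
have even x : qform P x = 0 by have := h x; have := h (- x); rewrite qformN lformN s0; lra.
have odd x : lform b x = 0 by have := h x; have := h (- x); rewrite qformN lformN s0; lra.
by split; [apply: sym_qform_eq0 | apply: lform_eq0 |].
Qed.

End QuadraticForms.

Section Gram.
Variable R : realFieldType.

Definition sqnorm (m : nat) (y : 'cV[R]_m) : R := (y^T *m y) 0 0.

Lemma sqnormE (m : nat) (y : 'cV[R]_m) : sqnorm y = \sum_i y i 0 ^+ 2.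
Proof. by rewrite /sqnorm mxE; apply: eq_bigr => i _; rewrite mxE expr2. Qed.

Lemma sqnorm_ge0 (m : nat) (y : 'cV[R]_m) : 0 <= sqnorm y.
Proof. by rewrite sqnormE sumr_ge0 // => i _; apply: sqr_ge0. Qed.

Lemma sqnorm_eq0 (m : nat) (y : 'cV[R]_m) : sqnorm y = 0 -> y = 0.
Proof.
rewrite sqnormE => /psumr_eq0P y0; apply/matrixP => i j; rewrite (ord1 j) mxE.
by apply/eqP; rewrite -sqrf_eq0; apply/eqP/y0 => // k _; apply: sqr_ge0.
Qed.

Lemma normal_eqP (m d : nat) (A : 'M[R]_(m, d)) (z : 'cV[R]_m) t0 t :
  A *m t0 = z -> A *m t = z <-> A^T *m A *m t = A^T *m z.
Proof.
move=> At0; split=> [<-|At]; first by rewrite mulmxA.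
have : sqnorm (A *m (t - t0)) = 0.
  by rewrite /sqnorm trmx_mul -!mulmxA (mulmxA A^T) mulmxBr At -At0 mulmxA subrr mulmx0 mxE.
by move/sqnorm_eq0; rewrite mulmxBr At0 => /subr0_eq.
Qed.

Lemma mxtrace_sqr_sym_ge0 (n : nat) (M : 'M[R]_n) : M^T = M -> 0 <= \tr (M *m M).
Proof.
move=> sM; rewrite /mxtrace sumr_ge0 // => i _; rewrite mxE sumr_ge0 // => j _.
by rewrite -{2}sM mxE -expr2 sqr_ge0.
Qed.

Variables (m l d : nat) (H : 'M[R]_(m, d)) (L : 'M[R]_(l, d)) (S : 'M[R]_d) (a : R).

Lemma mxtrace_gram2_ge0 : S^T = S -> 0 <= \tr (H *m S *m H^T *m H *m S *m H^T).
Proof.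
move=> symS.
have -> : H *m S *m H^T *m H *m S *m H^T = H *m S *m H^T *m (H *m S *m H^T).
  by rewrite !mulmxA.
by rewrite mxtrace_sqr_sym_ge0 // !trmx_mul trmxK symS mulmxA.
Qed.

Hypothesis gramHL : a *: (L^T *m L) = H^T *m H.

Lemma mxtrace_gram_scale : \tr (H *m S *m H^T) = a * \tr (L *m S *m L^T).
Proof. by rewrite !(mxtrace_mulC (_ *m S)) !mulmxA -gramHL -scalemxAl mxtraceZ. Qed.

Lemma mxtrace_gram2_scale :
  \tr (H *m S *m H^T *m H *m S *m H^T) = a ^+ 2 * \tr (L *m S *m L^T *m L *m S *m L^T).
Proof.
have gram2 n (A : 'M[R]_(n, d)) :
    \tr (A *m S *m A^T *m A *m S *m A^T) = \tr (S *m (A^T *m A) *m S *m (A^T *m A)).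
  by rewrite -!mulmxA mxtrace_mulC !mulmxA.
by rewrite !gram2 -gramHL -!(scalemxAl, scalemxAr) !scalerA mxtraceZ expr2.
Qed.

End Gram.

Section ATS.
Variables (R : rcfType) (m l d : nat).
Variables (H : 'M[R]_(m, d)) (L : 'M[R]_(l, d)) (y : 'cV[R]_m) (yt : 'cV[R]_l).

Lemma ATS_quadratic (K : nat) (A : 'M[R]_(K, d)) (z : 'cV[R]_K) x :
  ATS x A z = qform (A^T *m A) x - 2 * lform (A^T *m z) x + sqnorm z.
Proof.
have zAx : z^T *m (A *m x) = (x^T *m (A^T *m z))^T by rewrite !trmx_mul !trmxK mulmxA.
rewrite /ATS /qform /bform /lform /sqnorm [(A *m x - z)^T]linearB /= trmx_mul.
by rewrite mulmxBl !mulmxBr zAx !mulmxA !mxE; ring.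
Qed.

Lemma ATS_scaleP (c : R) :
  (forall x, ATS x H y = c * ATS x L yt) <->
  [/\ c *: (L^T *m L) = H^T *m H, c *: (L^T *m yt) = H^T *m y & sqnorm y = c * sqnorm yt].
Proof.
split=> [prop | [gram rhs norm] x]; last first.
  by rewrite !ATS_quadratic -gram -rhs norm qformZ lformZ; ring.
have [] := @quadratic_eq0 _ _ (H^T *m H - c *: (L^T *m L)) (H^T *m y - c *: (L^T *m yt))
  (sqnorm y - c * sqnorm yt).
- by rewrite linearB /= linearZ /= !trmx_mul !trmxK.
- by move=> x; rewrite qformB lformB qformZ lformZ; have := prop x; rewrite !ATS_quadratic; lra.
by move=> /subr0_eq gram /subr0_eq rhs /subr0_eq norm.
Qed.

Lemma enorm_scaleP (a : R) : 0 <= a ->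
  enorm y = Num.sqrt a * enorm yt <-> sqnorm y = a * sqnorm yt.
Proof.
have enormE K (z : 'cV[R]_K) : enorm z = Num.sqrt (sqnorm z) by rewrite /enorm sqnormE.
move=> a0; rewrite !enormE -sqrtrM //; split=> [/eqP|->] //.
by rewrite eqr_sqrt ?mulr_ge0 ?sqnorm_ge0 // => /eqP.
Qed.

Lemma ATS_weighted_eqP (kH kL : R) : 0 < kH -> 0 < kL ->
  (forall a, a *: (L^T *m L) = H^T *m H -> kL = a * kH) ->
  (forall x, ATS x H y * kH = ATS x L yt * kL) <->
  (exists a : R, 0 < a /\ a *: (L^T *m L) = H^T *m H /\ a *: (L^T *m yt) = H^T *m y
                 /\ enorm y = Num.sqrt a * enorm yt).
Proof.
move=> kH0 kL0 weights; split=> [eq_w | [a [a0 [gram [rhs norm]]]] x].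
  have a0 : 0 < kL / kH by rewrite divr_gt0.
  have /ATS_scaleP[gram rhs norm] : forall x, ATS x H y = kL / kH * ATS x L yt.
    by move=> x; apply: (mulIf (lt0r_neq0 kH0)); rewrite eq_w; field; apply: lt0r_neq0.
  by exists (kL / kH); do !split=> //; apply/enorm_scaleP => //; apply: ltW.
have /(ATS_scaleP a).2 -> : [/\ a *: (L^T *m L) = H^T *m H, a *: (L^T *m yt) = H^T *m y
                            & sqnorm y = a * sqnorm yt].
  by split=> //; apply/(enorm_scaleP (ltW a0)).
by rewrite (weights a gram) mulrCA mulrA.
Qed.

Lemma ATS_FE (S : 'M[R]_d) x : \tr (H *m S *m H^T) != 0 ->
  ATS_F S x H y = ATS x H y * (\tr (H *m S *m H^T) / \tr (H *m S *m H^T *m H *m S *m H^T)).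
Proof. by move=> tH0; rewrite /ATS_F /ATS_s expr2 -!mulrA mulKf. Qed.

End ATS.

Unset Implicit Arguments.
Theorem theorem2 (R : rcfType) (m l d : nat)
  (H : 'M[R]_(m, d)) (L : 'M[R]_(l, d)) (y : 'cV[R]_m) (yt : 'cV[R]_l)
  (Sigma : 'M[R]_d)
  (hH : exists theta, solset H y theta)
  (hL : exists theta, solset L yt theta)
  (hS : psd Sigma) :
  (* (a) *)
  ((exists a : R, a != 0 /\ a *: (L^T *m L) = H^T *m H /\ a *: (L^T *m yt) = H^T *m y) ->
     forall theta, solset H y theta <-> solset L yt theta)
  /\
  (* (b) *)
  (0 < \tr (H *m Sigma *m H^T) -> 0 < \tr (L *m Sigma *m L^T) ->
    ((forall x : 'cV[R]_d, ATS_s Sigma x H y = ATS_s Sigma x L yt) <->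
     (exists a : R, 0 < a /\ a *: (L^T *m L) = H^T *m H /\ a *: (L^T *m yt) = H^T *m y
                    /\ enorm y = Num.sqrt a * enorm yt)))
  /\
  (* (c) *)
  (0 < \tr (H *m Sigma *m H^T) -> 0 < \tr (L *m Sigma *m L^T) ->
   \tr (H *m Sigma *m H^T *m H *m Sigma *m H^T) != 0 ->
   \tr (L *m Sigma *m L^T *m L *m Sigma *m L^T) != 0 ->
    ((forall x : 'cV[R]_d, ATS_F Sigma x H y = ATS_F Sigma x L yt) <->
     (exists a : R, 0 < a /\ a *: (L^T *m L) = H^T *m H /\ a *: (L^T *m yt) = H^T *m y
                    /\ enorm y = Num.sqrt a * enorm yt))).
Proof.
have [symS _] := hS; have [t0 Ht0] := hH; have [t1 Lt1] := hL.
split.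
  move=> [a [a0 [gram rhs]]] t; rewrite /solset (normal_eqP t Ht0) (normal_eqP t Lt1).
  by rewrite -gram -rhs -scalemxAl; split=> [/(scalerI a0)|->].
have gram_a0 a : 0 < \tr (H *m Sigma *m H^T) -> a *: (L^T *m L) = H^T *m H -> a != 0.
  by move=> tH gram; apply: contraTneq tH => a0; rewrite (mxtrace_gram_scale _ gram) a0 mul0r ltxx.
split=> tH tL.
  apply: ATS_weighted_eqP; rewrite ?invr_gt0 // => a gram.
  by rewrite (mxtrace_gram_scale _ gram) invfM mulVKf // (gram_a0 a tH gram).
move=> qH0 qL0.
have qH : 0 < \tr (H *m Sigma *m H^T *m H *m Sigma *m H^T).
  by rewrite lt_def qH0 mxtrace_gram2_ge0.
have qL : 0 < \tr (L *m Sigma *m L^T *m L *m Sigma *m L^T).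
  by rewrite lt_def qL0 mxtrace_gram2_ge0.
have weights a : a *: (L^T *m L) = H^T *m H ->
    \tr (L *m Sigma *m L^T) / \tr (L *m Sigma *m L^T *m L *m Sigma *m L^T) =
    a * (\tr (H *m Sigma *m H^T) / \tr (H *m Sigma *m H^T *m H *m Sigma *m H^T)).
  move=> gram; have a0 := gram_a0 a tH gram.
  rewrite (mxtrace_gram_scale _ gram) (mxtrace_gram2_scale _ gram).
  by field; rewrite a0 qL0.
apply: iff_trans (ATS_weighted_eqP y yt (divr_gt0 tH qH) (divr_gt0 tL qL) weights).
by split=> eqF x; have := eqF x; rewrite !ATS_FE ?lt0r_neq0.
Qed.
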